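(* Let $(X,d)$ be a metric space, $\mu$ a non-atomic Borel measure on $X$, $m$ a Borel measure on $X$ and $0<p<\infty$. If $f:X\to\mathbb R$ is $ACC_p$ and $f=0$ $m$-almost everywhere, then the family $\Gamma=\{\gamma\in\Gamma^\mu: f\circ\gamma\not\equiv0\}$ has $\mathrm{Mod}_p(\Gamma)=0$.
   Context: A path is a continuous map $\gamma:[a,b]\to X$; a subpath is a restriction to a subinterval, trivial if that interval is a point; $\mathrm{Im}(\gamma)=\gamma([a,b])$. $\mu$ non-atomic: $\mu(\{x\})=0$ for all $x$. $\Gamma^\mu$ is the set of all non-trivial injective paths $\gamma$ with $0<\mu(\mathrm{Im}(\tilde\gamma))<\infty$ for every non-trivial subpath $\tilde\gamma$. For Borel $g\ge0$, $\int_\gamma g:=\int_{\mathrm{Im}(\gamma)}g\,d\mu$. For $\gamma:[a,b]\to X$ in $\Gamma^\mu$, $h(\gamma)=\mu(\mathrm{Im}(\gamma))$, $\nu_\gamma(x)=\mu(\gamma([a,x]))$ (a bijection $[a,b]\to[0,h(\gamma)]$) and $\gamma_h=\gamma\circ\nu_\gamma^{-1}$. For $\Gamma\subset\Gamma^\mu$, $\mathrm{Mod}_p(\Gamma)=\inf\int_Xg^p\,dm$ over Borel $g\ge0$ with $\int_\gamma g\ge1$ for all $\gamma\in\Gamma$. $f$ is $ACC_p$ if $f\circ\gamma_h$ is absolutely continuous on $[0,h(\gamma)]$ for all $\gamma\in\Gamma^\mu$ outside a family of $p$-modulus zero. *)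

From HB Require Import structures.
From mathcomp Require Import all_boot all_order all_algebra.
From mathcomp Require Import all_classical all_reals all_analysis measurable_realfun.
Set Implicit Arguments. Unset Strict Implicit. Unset Printing Implicit Defensive.
Import Order.TTheory GRing.Theory Num.Theory.
Import numFieldNormedType.Exports.
Local Open Scope classical_set_scope.
Local Open Scope ring_scope.

Notation Borel X := (g_sigma_algebraType (@open X)).

Section Defs.
Context {R : realType} {X : pseudoPMetricType R}.

(* A (candidate) cpath gamma : [pa, pb] -> X, given by a function on R
   of which only the restriction to [pa, pb] matters. *)
Record cpath := CPath { pa : R; pb : R; pf : R -> X }.

Definition Im (g : cpath) : set X := pf g @` `[pa g, pb g].

Definition GammaMu (mu : {measure set (Borel X) -> \bar R}) : set cpath :=
  [set g | pa g < pb g /\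
     {within `[pa g, pb g], continuous (pf g)} /\
     set_inj `[pa g, pb g] (pf g) /\
     (forall c d, pa g <= c -> c < d -> d <= pb g ->
        (0 < mu (pf g @` `[c, d]) < +oo)%E)].

Definition line_int (mu : {measure set (Borel X) -> \bar R})
  (gam : cpath) (g : Borel X -> \bar R) : \bar R :=
  (\int[mu]_(x in Im gam) g x)%E.

Definition admissible (mu : {measure set (Borel X) -> \bar R})
  (Gam : set cpath) (g : Borel X -> \bar R) : Prop :=
  measurable_fun setT g /\ (forall x, (0 <= g x)%E) /\
  (forall gam, Gam gam -> (1 <= line_int mu gam g)%E).

Definition Mod (p : R) (mu m : {measure set (Borel X) -> \bar R})
  (Gam : set cpath) : \bar R :=
  ereal_inf [set (\int[m]_x (g x `^ p))%E | g in admissible mu Gam].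

Definition hgt (mu : {measure set (Borel X) -> \bar R}) (g : cpath) : R :=
  fine (mu (Im g)).
Definition nu (mu : {measure set (Borel X) -> \bar R}) (g : cpath) (x : R) : R :=
  fine (mu (pf g @` `[pa g, x])).

(* gamma_h = gamma o nu_gamma^{-1} (nu_gamma : [a,b] -> [0,h] is a bijection
   for gamma in Gamma^mu; the inverse is taken by choice) *)
Definition gamma_h (mu : {measure set (Borel X) -> \bar R}) (g : cpath)
  (t : R) : X :=
  pf g (xget (pa g) [set x | pa g <= x <= pb g /\ nu mu g x = t]).

Definition abs_cont (a b : R) (F : R -> R) : Prop :=
  forall e : R, 0 < e -> exists2 d : R, 0 < d &
    forall (n : nat) (I : 'I_n -> R * R),
      (forall i, a <= (I i).1 /\ (I i).1 <= (I i).2 /\ (I i).2 <= b) ->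
      (forall i j, i != j -> (I i).2 <= (I j).1 \/ (I j).2 <= (I i).1) ->
      \sum_(i < n) ((I i).2 - (I i).1) < d ->
      \sum_(i < n) `|F (I i).2 - F (I i).1| < e.

Definition ACC (p : R) (mu m : {measure set (Borel X) -> \bar R})
  (f : X -> R) : Prop :=
  exists Gam0 : set cpath, Gam0 `<=` GammaMu mu /\ Mod p mu m Gam0 = 0%E /\
    forall g, GammaMu mu g -> ~ Gam0 g ->
      abs_cont 0 (hgt mu g) (f \o gamma_h mu g).

End Defs.

From Pilot Require Import Defs.
From HB Require Import structures.
From mathcomp Require Import all_boot all_order all_algebra.
From mathcomp Require Import all_classical all_reals all_analysis measurable_realfun.
Import Order.TTheory GRing.Theory Num.Theory.
Import numFieldNormedType.Exports.
Local Open Scope classical_set_scope.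
Local Open Scope ring_scope.

(* Let N be an m-null Borel set outside of which f vanishes, and let Gam0 be
   the exceptional family of modulus zero in the definition of ACC_p.  For every
   path gam of the family that is not in Gam0, f o gam_h is absolutely
   continuous; since nu_gam increases by at most mu(gam([u, v])) on [u, v] and
   these measures tend to mu({gam t}) = 0 as [u, v] shrinks to t, f o gam is
   continuous, so f (gam t) <> 0 forces gam([c, d]) to lie in N for some c < d,
   a set of positive mu-measure.  Hence if g is admissible for Gam0, then
   g + oo * 1_N is admissible for the whole family, and it has the same
   p-integral w.r.t. m as g.  Therefore Mod_p of the family is at most
   Mod_p Gam0 = 0. *)

Lemma closed_Borel_measurable (T : ptopologicalType) (A : set T) :
  closed A -> measurable (A : set (Borel T)).
Proof.
move=> cA; rewrite -[A]setCK; apply: measurableC.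
by apply: sub_sigma_algebra; exact: closed_openC.
Qed.

Lemma compact_Borel_measurable (T : ptopologicalType) (A : set T) :
  hausdorff_space T -> compact A -> measurable (A : set (Borel T)).
Proof. by move=> hT cA; apply: closed_Borel_measurable; exact: compact_closed. Qed.

Lemma image_itv_subset (disp : Order.disp_t) (T : porderType disp) (U : Type)
    (f : T -> U) (c d c' d' : T) :
  (c' <= c)%O -> (d <= d')%O -> f @` `[c, d] `<=` f @` `[c', d'].
Proof.
move=> c'c dd'; apply: image_subset => y /=.
by apply: subitvP; rewrite subitvE !bnd_simp c'c dd'.
Qed.

Section GammaMuPath.
Context {R : realType} {X : pseudoPMetricType R}.
Hypothesis hX : hausdorff_space X.
Context {mu : {measure set (Borel X) -> \bar R}} {g : @cpath R X}.
Hypothesis Gg : GammaMu mu g.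

Local Notation a := (pa g).
Local Notation b := (pb g).
Local Notation G := (pf g).

Lemma GammaMu_lt : a < b. Proof. by case: Gg. Qed.

Lemma GammaMu_inj : set_inj `[a, b] G. Proof. by case: Gg => _ [_ []]. Qed.

Lemma GammaMu_measure_gt0 c d : a <= c -> c < d -> d <= b ->
  (0 < mu (G @` `[c, d]))%E.
Proof. by case: Gg => _ [_ [_ Gmu]] ac cd db; case/andP: (Gmu c d ac cd db). Qed.

Lemma measurable_image_segment c d : a <= c -> d <= b ->
  measurable (G @` `[c, d] : set (Borel X)).
Proof.
move=> ac db; apply: compact_Borel_measurable => //.
apply: continuous_compact; last exact: segment_compact.
case: Gg => _ [Gcont _]; apply: continuous_subspaceW Gcont => x /=.
by apply: subitvP; rewrite subitvE !bnd_simp ac db.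
Qed.

Lemma image_segment_fin_num c d : a <= c -> d <= b ->
  mu (G @` `[c, d]) \is a fin_num.
Proof.
move=> ac db; rewrite ge0_fin_numE ?measure_ge0 //.
case: Gg => _ [_ [_ Gmu]]; have /andP[_ ab_fin] := Gmu a b (lexx a) GammaMu_lt (lexx b).
apply: le_lt_trans ab_fin; apply: le_measure; rewrite ?inE.
- exact: measurable_image_segment.
- exact: measurable_image_segment.
- exact: image_itv_subset.
Qed.

Lemma nuE x : a <= x -> x <= b -> mu (G @` `[a, x]) = (nu mu g x)%:E.
Proof. by move=> ax xb; rewrite /nu fineK // image_segment_fin_num. Qed.

Lemma nu_ge0 x : 0 <= nu mu g x.
Proof. exact/fine_ge0/measure_ge0. Qed.

Lemma nu_lt x y : a <= x -> x < y -> y <= b -> nu mu g x < nu mu g y.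
Proof.
move=> ax xy yb; set z := (x + y) / 2.
have xz : x < z by rewrite midf_lt.
have zy : z < y by rewrite midf_lt.
have az := le_trans ax (ltW xz); have xb := le_trans (ltW xy) yb.
(* G([z, y]) has positive measure and, by injectivity, misses G([a, x]). *)
have disj : G @` `[a, x] `&` G @` `[z, y] = set0.
  apply/seteqP; split => // _ [[u /= + <-] [v /= +]].
  rewrite !in_itv /= => /andP[au ux] /andP[zv vy] Guv.
  have uv : u = v.
    apply: GammaMu_inj => //; rewrite inE /= in_itv /=.
      by rewrite au (le_trans ux xb).
    by rewrite (le_trans az zv) (le_trans vy yb).
  by move: (lt_le_trans (le_lt_trans ux xz) zv); rewrite uv ltxx.
have sub : G @` `[a, x] `|` G @` `[z, y] `<=` G @` `[a, y].
  by move=> w []; apply: image_itv_subset; rewrite ?lexx ?(ltW xy).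
have mseg := measurable_image_segment.
have mU : measurable (G @` `[a, x] `|` G @` `[z, y] : set (Borel X)).
  by apply: measurableU; exact: mseg.
rewrite -lte_fin -nuE // -nuE ?(le_trans ax (ltW xy)) //.
apply: lt_le_trans (le_measure mu (mem_set mU) (mem_set (mseg _ _ (lexx a) yb)) sub).
rewrite (measureU mu (mseg _ _ (lexx a) xb) (mseg _ _ az yb) disj).
by rewrite lteDl ?image_segment_fin_num ?GammaMu_measure_gt0.
Qed.

Lemma nu_le x y : a <= x -> x <= y -> y <= b -> nu mu g x <= nu mu g y.
Proof.
move=> ax; rewrite le_eqVlt => /predU1P[-> //|xy] yb.
exact/ltW/nu_lt.
Qed.

Lemma nuB_le x y : a <= x -> x <= y -> y <= b ->
  nu mu g y - nu mu g x <= fine (mu (G @` `[x, y])).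
Proof.
move=> ax xy yb; have ay := le_trans ax xy; have xb := le_trans xy yb.
have mseg := measurable_image_segment.
have mU : measurable (G @` `[a, x] `|` G @` `[x, y] : set (Borel X)).
  by apply: measurableU; exact: mseg.
have sub : G @` `[a, y] `<=` G @` `[a, x] `|` G @` `[x, y].
  move=> v [w]; rewrite /= in_itv /= => /andP[aw wy] <-.
  have [wx|xw] := leP w x; [left|right]; exists w => //=; rewrite in_itv /=.
    by rewrite aw wx.
  by rewrite (ltW xw) wy.
rewrite lerBlDl -lee_fin EFinD -!nuE // fineK ?image_segment_fin_num //.
apply: le_trans (le_measure mu (mem_set (mseg _ _ (lexx a) yb)) (mem_set mU) sub) _.
exact: (measureU2 mu (mseg _ _ (lexx a) xb) (mseg _ _ ax yb)).
Qed.

Lemma gamma_h_nu y : a <= y -> y <= b -> gamma_h mu g (nu mu g y) = G y.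
Proof.
move=> ay yb; rewrite /gamma_h; set P := [set x | _].
have [/andP[ax xb] nuxy] : P (xget a P).
  by apply: xgetPex; exists y; split => //; rewrite ay yb.
congr G; have [xy|yx|//] := ltgtP (xget a P) y.
- by move: (nu_lt _ _ ax xy yb); rewrite nuxy ltxx.
- by move: (nu_lt _ _ ay yx xb); rewrite nuxy ltxx.
Qed.

Definition window_image (x : R) (n : nat) : set X :=
  G @` `[Num.max a (x - n.+1%:R^-1), Num.min b (x + n.+1%:R^-1)].

Lemma window_bounds x (r : R) : a <= Num.max a (x - r) /\ Num.min b (x + r) <= b.
Proof. by rewrite le_max ge_min !lexx. Qed.

Lemma measurable_window_image x n : measurable (window_image x n : set (Borel X)).
Proof. by have [] := window_bounds x n.+1%:R^-1; exact: measurable_image_segment. Qed.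

Lemma bigcap_window_image x : a <= x -> x <= b ->
  \bigcap_n window_image x n = [set G x].
Proof.
move=> ax xb; apply/seteqP; split => [z Wz|_ ->]; last first.
  move=> n _; exists x => //=; rewrite in_itv /= ge_max le_min ax xb /=.
  by rewrite gerBl lerDl invr_ge0 ler0n.
have in_window n y : y \in `[Num.max a (x - n.+1%:R^-1), Num.min b (x + n.+1%:R^-1)] ->
    [/\ a <= y, y <= b & `|y - x| <= n.+1%:R^-1].
  rewrite in_itv /= ge_max le_min => /andP[/andP[ay xy] /andP[yb yx]].
  by rewrite ay yb ler_distlC lerBlDr yx -lerBlDr xy.
have [y0 /in_window[ay0 y0b _] Gy0] := Wz 0%N I; subst z.
congr G; apply/eqP; apply: contraT => y0x.
have /ltr_add_invr[k] : 0 < `|y0 - x| by rewrite normr_gt0 subr_eq0.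
rewrite add0r => lt_k; have [yk /in_window[ayk ykb yk_near] Gyk] := Wz k I.
have yky0 : yk = y0.
  by apply: (GammaMu_inj _ _ _ _ Gyk); rewrite inE /= in_itv /= ?ayk ?ykb ?ay0 ?y0b.
by move: yk_near; rewrite yky0 leNgt lt_k.
Qed.

Hypothesis mu_nonatomic : forall x : X, mu [set x] = 0%E.

Lemma window_image_measure_small x e : a <= x -> x <= b -> 0 < e ->
  exists n, (mu (window_image x n) < e%:E)%E.
Proof.
move=> ax xb e0.
have decr : {homo window_image x : n k / (n <= k)%N >-> (k <= n)%O}.
  move=> n k nk; apply/subsetPset; apply: image_itv_subset.
    by rewrite ge_max !le_max lexx lerB ?orbT // lef_pV2 ?posrE ?ler_nat.
  by rewrite le_min !ge_min lexx lerD ?orbT // lef_pV2 ?posrE ?ler_nat.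
have fin0 : (mu (window_image x 0) < +oo)%E.
  have [] := window_bounds x 1%:R^-1.
  by move=> *; rewrite ltey_eq image_segment_fin_num.
have mcap : measurable (\bigcap_n window_image x n : set (Borel X)).
  by apply: bigcapT_measurable => n; exact: measurable_window_image.
have := nonincreasing_cvg_mu fin0 (@measurable_window_image x) mcap decr.
rewrite bigcap_window_image // mu_nonatomic => /(_ _ (@nbhs_open_ereal_lt _ 0 (fun=> e) e0)).
by move=> [n _ /(_ n (leqnn n))]; exists n.
Qed.

Lemma abs_cont_gamma_h_window (F : X -> R) t (e : R) :
  abs_cont 0 (hgt mu g) (F \o gamma_h mu g) -> a <= t -> t <= b -> 0 < e ->
  exists2 r, 0 < r & forall u v, Num.max a (t - r) <= u -> u <= v ->
    v <= Num.min b (t + r) -> `|F (G v) - F (G u)| < e.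
Proof.
move=> Fac at_ tb e0; have [dl dl0 Fdl] := Fac e e0.
have [n Wn] := window_image_measure_small _ _ at_ tb dl0.
exists n.+1%:R^-1 => [|u v cu uv vd]; first by rewrite invr_gt0 ltr0n.
have [ac db] := window_bounds t n.+1%:R^-1.
have au := le_trans ac cu; have vb := le_trans vd db.
have := Fdl 1%N (fun=> (nu mu g u, nu mu g v)).
rewrite !big_ord1 /= !gamma_h_nu //; [|exact: le_trans uv vb|exact: le_trans au uv].
apply.
- move=> _ /=; split; first exact: nu_ge0.
  split; first exact: nu_le.
  exact: (nu_le _ _ (le_trans au uv) vb (lexx b)).
- by move=> i j; rewrite !ord1.
apply: le_lt_trans (nuB_le _ _ au uv vb) _; rewrite -lte_fin fineK ?image_segment_fin_num //.
apply: le_lt_trans Wn; apply: le_measure; rewrite ?inE.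
- exact: measurable_image_segment.
- exact: measurable_window_image.
- exact: image_itv_subset.
Qed.

Lemma abs_cont_gamma_h_nonvanishing (F : X -> R) t :
  abs_cont 0 (hgt mu g) (F \o gamma_h mu g) -> a <= t -> t <= b -> F (G t) <> 0 ->
  exists c d, [/\ a <= c, c < d, d <= b & G @` `[c, d] `<=` ~` [set x | F x = 0]].
Proof.
move=> Fac at_ tb Ft0.
have Ft_gt0 : 0 < `|F (G t)| by rewrite normr_gt0; exact/eqP.
have [r r0 osc] := abs_cont_gamma_h_window _ _ _ Fac at_ tb Ft_gt0.
have [ac db] := window_bounds t r.
have ct : Num.max a (t - r) <= t by rewrite ge_max at_ gerBl ltW.
have td : t <= Num.min b (t + r) by rewrite le_min tb lerDl ltW.
exists (Num.max a (t - r)), (Num.min b (t + r)); split => //.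
  rewrite gt_max !lt_min GammaMu_lt (le_lt_trans at_) ?ltrDl //.
  by rewrite (lt_le_trans _ tb) ?gtrBl // ltrBlDr -addrA ltrDl addr_gt0.
move=> z [y]; rewrite /= in_itv /= => /andP[cy yd] <- Fy0.
have [ty|yt] := leP t y.
  by move: (osc t y ct ty yd); rewrite Fy0 sub0r normrN ltxx.
by move: (osc y t cy (ltW yt) td); rewrite Fy0 subr0 ltxx.
Qed.

End GammaMuPath.

Section InftyOn.
Context {d : measure_display} {T : measurableType d} {R : realType}.

Definition infty_on (N : set T) (x : T) : \bar R := (+oo * (\1_N x)%:E)%E.

Lemma measurable_infty_on N : measurable N -> measurable_fun setT (infty_on N).
Proof. by move=> mN; apply/measurable_funeM/measurable_EFinP; exact: measurable_indic. Qed.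

Lemma infty_on_ge0 N x : (0 <= infty_on N x)%E.
Proof. by rewrite mule_ge0 // lee_fin indicE. Qed.

Lemma infty_on_in N x : N x -> infty_on N x = +oo%E.
Proof. by move=> Nx; rewrite /infty_on indicE mem_set // mule1. Qed.

Lemma infty_on_notin N x : ~ N x -> infty_on N x = 0%E.
Proof. by move=> Nx; rewrite /infty_on indicE memNset // mule0. Qed.

Lemma integral_powe_add_infty_on_null (m : {measure set T -> \bar R}) (p : R)
    (N : set T) (h : T -> \bar R) :
  measurable N -> m N = 0%E -> measurable_fun setT h ->
  (\int[m]_x ((h x + infty_on N x) `^ p) = \int[m]_x (h x `^ p))%E.
Proof.
move=> mN mN0 mh; apply: ae_eq_integral => //.
- apply: measurableT_comp (measurable_poweR p) _.
  by apply: emeasurable_funD => //; exact: measurable_infty_on.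
- exact: measurableT_comp (measurable_poweR p) mh.
- exists N; split => // x /= Nx; apply: contra_notP Nx => nNx _.
  by rewrite infty_on_notin // adde0.
Qed.

End InftyOn.

Section ModulusNullModification.
Context {R : realType} {X : pseudoPMetricType R}.
Hypothesis hX : hausdorff_space X.
Variables mu m : {measure set (Borel X) -> \bar R}.

Lemma Mod_ge0 p (Gam : set (@cpath R X)) : (0 <= Mod p mu m Gam)%E.
Proof.
apply/ereal_infP => _ [h _ <-].
by apply: integral_ge0 => x _; exact: poweR_ge0.
Qed.

Lemma measurable_Im {gam : @cpath R X} :
  GammaMu mu gam -> measurable (Defs.Im gam : set (Borel X)).
Proof. by move=> Ggam; exact: (measurable_image_segment hX Ggam _ _ (lexx _) (lexx _)). Qed.

Lemma line_int_infty_segment (gam : @cpath R X) (N : set X) (h : Borel X -> \bar R) c d :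
  GammaMu mu gam -> pa gam <= c -> c < d -> d <= pb gam ->
  pf gam @` `[c, d] `<=` N -> measurable_fun setT h -> (forall x, 0 <= h x)%E ->
  (forall x, N x -> h x = +oo%E) -> line_int mu gam h = +oo%E.
Proof.
move=> Ggam ac cd db cdN mh h0 hN.
have mcd := measurable_image_segment hX Ggam _ _ ac db.
have cdIm : pf gam @` `[c, d] `<=` Defs.Im gam by exact: image_itv_subset.
rewrite /line_int; apply/eqP; rewrite eq_le leey /=.
apply: le_trans _ (ge0_subset_integral mu mcd (measurable_Im Ggam)
  (measurable_funTS mh) (fun x _ => h0 x) cdIm).
rewrite (eq_integral (cst +oo%E)) => [|x /set_mem cdx]; last exact/hN/cdN.
by rewrite integral_cst // gt0_mulye // (GammaMu_measure_gt0 Ggam).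
Qed.

Lemma admissible_add_infty_on (Gam0 Gam : set (@cpath R X)) (N : set (Borel X)) g0 :
  measurable N -> Gam `<=` GammaMu mu ->
  (forall gam, Gam gam -> ~ Gam0 gam -> exists c d,
     [/\ pa gam <= c, c < d, d <= pb gam & pf gam @` `[c, d] `<=` N]) ->
  admissible mu Gam0 g0 -> admissible mu Gam (g0 \+ infty_on N)%E.
Proof.
move=> mN GamMu Gam_seg [mg0 [g0_ge0 g0_adm]].
have mg : measurable_fun setT (g0 \+ infty_on N)%E.
  by apply: emeasurable_funD => //; exact: measurable_infty_on.
have g_ge0 x : (0 <= (g0 \+ infty_on N) x)%E by rewrite adde_ge0 ?infty_on_ge0.
split=> //; split=> // gam Ggam; have GMgam := GamMu _ Ggam.
have [G0gam|nG0gam] := pselect (Gam0 gam).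
  apply: le_trans (g0_adm _ G0gam) _.
  apply: ge0_le_integral => //; [exact: measurable_Im|exact: measurable_funTS..|].
  by move=> x _; rewrite leeDl ?infty_on_ge0.
have [c [d [ac cd db cdN]]] := Gam_seg _ Ggam nG0gam.
rewrite (line_int_infty_segment _ _ _ _ _ GMgam ac cd db cdN) ?leey //.
by move=> x Nx /=; rewrite infty_on_in // addey // gt_eqF // (lt_le_trans ltNy0).
Qed.

End ModulusNullModification.

Theorem lemma3p7 (R : realType) (X : pseudoPMetricType R)
  (hX : hausdorff_space X)
  (mu m : {measure set (Borel X) -> \bar R})
  (mu_nonatomic : forall x : X, mu [set x] = 0%E)
  (p : R) (hp : 0 < p) (f : X -> R)
  (hf : ACC p mu m f)
  (hf0 : {ae m, forall x : Borel X, f x = 0}) :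
  Mod p mu m
    [set g : cpath | GammaMu mu g /\
       exists t, pa g <= t <= pb g /\ f (pf g t) <> 0] = 0%E.
Proof.
have [N [mN mN0 fN]] := hf0.
have [Gam0 [_ [Mod0 f_ac]]] := hf.
apply/eqP; rewrite eq_le Mod_ge0 andbT -Mod0.
apply: ereal_inf_le_tmp => _ [g0 g0_adm <-]; exists (g0 \+ infty_on N)%E.
  apply: (admissible_add_infty_on hX mu Gam0) => //; first by move=> gam [].
  move=> gam [Ggam [t [/andP[a_t t_b] ft]]] nG0gam.
  have [c [d [ac cd db cd_f]]] :=
    abs_cont_gamma_h_nonvanishing hX Ggam mu_nonatomic _ _ (f_ac _ Ggam nG0gam) a_t t_b ft.
  by exists c, d; split => //; exact: subset_trans cd_f fN.
by rewrite integral_powe_add_infty_on_null //; case: g0_adm.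
Qed.
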